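(* There exists an algorithm that, given any set $A$ of $N$ elements and an integer $h \in \{0,\dots,N\}$, returns a set chosen uniformly at random among all subsets of $A$ with exactly $h$ elements. The algorithm requires $O(N)$ time and at most $60N$ random bits with probability at least $1 - O\left(e^{-\sqrt{N}}\right)$.
   Context: The algorithm has access to a source of independent unbiased random bits. *)

From Stdlib Require Import Reals.
From mathcomp Require Import all_boot.

Set Implicit Arguments.
Unset Strict Implicit.
Unset Printing Implicit Defensive.

Inductive instr : Type :=
| IConst (d c : nat)
| IAdd (d s1 s2 : nat)
| ISub (d s1 s2 : nat)        (* reg d := reg s1 - reg s2 (truncated)  *)
| IMul (d s1 s2 : nat)
| IDiv (d s1 s2 : nat)
| IMod (d s1 s2 : nat)
| ILoad (d s : nat)
| IStore (s1 s2 : nat)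
| IRand (d : nat)
| IJlt (s1 s2 l : nat)
| IJmp (l : nat)
| IHalt.

Definition program := seq instr.

Record state := State {
  pc : nat;
  reg : nat -> nat;
  mem : nat -> nat;
  used : nat   (* number of random bits consumed so far *)
}.

Definition upd (f : nat -> nat) (i v : nat) : nat -> nat :=
  fun j => if j == i then v else f j.

Definition is_halt (i : instr) : bool :=
  if i is IHalt then true else false.

(* Word size W: an arithmetic result that does not fit in W bits is a
   fault (the machine gets stuck and never halts).  Reading a random bit
   beyond the supplied finite bit string w also gets the machine stuck. *)
Definition step (P : program) (W : nat) (w : seq bool) (s : state)
  : option state :=
  let next r := State (pc s).+1 r (mem s) (used s) in
  let arith d v := if v < 2 ^ W then Some (next (upd (reg s) d v)) else None in
  match nth IHalt P (pc s) with
  | IConst d c => Some (next (upd (reg s) d c))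
  | IAdd d a b => arith d (reg s a + reg s b)
  | ISub d a b => arith d (reg s a - reg s b)
  | IMul d a b => arith d (reg s a * reg s b)
  | IDiv d a b => arith d (reg s a %/ reg s b)
  | IMod d a b => arith d (reg s a %% reg s b)
  | ILoad d a => Some (next (upd (reg s) d (mem s (reg s a))))
  | IStore a b =>
      Some (State (pc s).+1 (reg s) (upd (mem s) (reg s a) (reg s b)) (used s))
  | IRand d =>
      if used s < size w then
        Some (State (pc s).+1 (upd (reg s) d (nth false w (used s)))
                    (mem s) (used s).+1)
      else None
  | IJlt a b l =>
      Some (State (if reg s a < reg s b then l else (pc s).+1)
                  (reg s) (mem s) (used s))
  | IJmp l => Some (State l (reg s) (mem s) (used s))
  | IHalt => None
  end.

Fixpoint run (P : program) (W : nat) (w : seq bool) (T : nat) (s : state)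
  : option state :=
  if is_halt (nth IHalt P (pc s)) then Some s else
  match T with
  | 0 => None
  | T'.+1 =>
      match step P W w s with
      | Some s' => run P W w T' s'
      | None => None
      end
  end.

Definition halts (o : option state) : bool :=
  if o is Some _ then true else false.

Definition init (A : seq nat) (h : nat) : state :=
  State 0 (fun r => if r == 0 then size A else if r == 1 then h else 0)
        (fun i => nth 0 A i) 0.

Definition output (s : state) (h : nat) : seq nat :=
  [seq mem s i | i <- iota 0 h].

(* As L -> oo this increases to the probability that the algorithm
   (run on an infinite stream of independent unbiased bits) outputs S. *)
Definition prob_out (P : program) (W : nat) (A : seq nat) (h : nat)
  (S : seq nat) (L : nat) : R :=
  Rdiv (INR (#|[pred w : L.-tuple bool |
          if run P W w L (init A h) is Some s
          then perm_eq (output s h) S else false]|)%nat) (pow 2 L).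

Definition prob_within (P : program) (W : nat) (A : seq nat) (h : nat)
  (T B : nat) : R :=
  Rdiv (INR (#|[pred w : B.-tuple bool | halts (run P W w T (init A h))]|)%nat) (pow 2 B).

Definition word_size (cw N : nat) : nat := cw * (trunc_log 2 N).+1.

(* The algorithm scans A once and keeps its i-th element with probability
   (h - c) / (N - i), where c elements have been kept so far; along any h-subset
   these probabilities multiply to 1 / C(N, h).  A Bernoulli(r/q) trial compares
   the random bits with the binary expansion of r/q, produced by long division,
   and stops at the first disagreement: it is exact and reads a geometric number
   G of bits, with E[(3/2)^G] = 3.  Hence N trials need more than 60 N bits with
   probability at most 3^N (2/3)^(60 N) <= exp (- sqrt N).  The program spends at
   most 9 instructions per element and per bit, and all its intermediate values
   are at most 2 N, so words of 2 (log N + 1) bits suffice.  The finite-horizon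
   probabilities prob_out L are squeezed between the probabilities that the first
   K bits, resp. all L bits, produce the subset, which converge to 1 / C(N, h). *)

From Pilot Require Import Defs.
From Stdlib Require Import Reals Lra Psatz.
From mathcomp Require Import all_boot zify.

Set Implicit Arguments.
Unset Strict Implicit.
Unset Printing Implicit Defensive.

Local Open Scope R_scope.

Fixpoint prob (L : nat) (E : seq bool -> bool) : R :=
  if L is L'.+1 then (prob L' (fun w => E (false :: w)) + prob L' (fun w => E (true :: w))) / 2
  else if E [::] then 1 else 0.

Lemma probS L E :
  prob L.+1 E = (prob L (fun w => E (false :: w)) + prob L (fun w => E (true :: w))) / 2.
Proof. by []. Qed.

Fixpoint bitstrings (L : nat) : seq (seq bool) :=
  if L is L'.+1 then map (cons false) (bitstrings L') ++ map (cons true) (bitstrings L')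
  else [:: [::]].

Lemma mem_map_cons (T : eqType) (a : T) (s : seq (seq T)) v :
  (v \in map (cons a) s) = if v is b :: v' then (b == a) && (v' \in s) else false.
Proof.
case: v => [|b v]; first by apply/mapP => -[].
by apply/mapP/andP => [[v' Hv' [-> ->]] | [/eqP -> Hv]]; [split | exists v].
Qed.

Lemma mem_bitstrings L w : (w \in bitstrings L) = (size w == L).
Proof.
elim: L w => [|L IH] [|b w] //=; rewrite mem_cat !mem_map_cons // IH eqSS.
by case: b; rewrite ?andbF ?orbF.
Qed.

Lemma uniq_bitstrings L : uniq (bitstrings L).
Proof.
elim: L => [|L IH] //=; rewrite cat_uniq !map_inj_uniq ?IH //=; try by move=> ? ? [].
by rewrite andbT; apply/hasPn => v /mapP [v' _ ->]; apply/mapP => -[].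
Qed.

Lemma card_tuple_count L (E : seq bool -> bool) :
  #|[pred w : L.-tuple bool | E w]| = count E (bitstrings L).
Proof.
rewrite cardE size_filter -enumT -(count_map val E).
apply/permP: E; apply: uniq_perm; rewrite ?uniq_bitstrings ?(map_inj_uniq val_inj) ?enum_uniq //.
move=> w; rewrite mem_bitstrings.
apply/mapP/idP => [[t _ ->] | size_w]; first by rewrite size_tuple.
by exists (Tuple size_w); rewrite ?mem_enum.
Qed.

Lemma prob_count L E : prob L E = INR (count E (bitstrings L)) / 2 ^ L.
Proof.
elim: L E => [|L IH] E /=; first by case: (E [::]); rewrite /= Rdiv_1_r.
have count_cons b : count E (map (cons b) (bitstrings L)) =
    count (fun w => E (b :: w)) (bitstrings L) by rewrite count_map.
rewrite count_cat !count_cons !IH plus_INR; field; apply: pow_nonzero; lra.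
Qed.

Lemma prob_card L (E : seq bool -> bool) :
  INR #|[pred w : L.-tuple bool | E w]| / 2 ^ L = prob L E.
Proof. by rewrite card_tuple_count prob_count. Qed.

Lemma prob_outE P W A h S L :
  prob_out P W A h S L =
  prob L (fun w => if run P W w L (init A h) is Some s then perm_eq (output s h) S else false).
Proof. by rewrite /prob_out -prob_card. Qed.

Lemma prob_withinE P W A h T B :
  prob_within P W A h T B = prob B (fun w => halts (run P W w T (init A h))).
Proof. by rewrite /prob_within -prob_card. Qed.

Lemma eq_prob L E E' : (forall w, size w = L -> E w = E' w) -> prob L E = prob L E'.
Proof.
move=> EE'; rewrite !prob_count; congr (INR _ / _).
by apply: eq_in_count => w; rewrite mem_bitstrings => /eqP; apply: EE'.
Qed.

Lemma le_prob L (E E' : seq bool -> bool) :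
  (forall w, size w = L -> E w -> E' w) -> prob L E <= prob L E'.
Proof.
elim: L E E' => [|L IH] E E' EE' /=.
  by case E_nil: (E [::]); [rewrite EE' //; lra | case: (E' [::]); lra].
suff le_cons : forall b, prob L (fun w => E (b :: w)) <= prob L (fun w => E' (b :: w)).
  by have := le_cons false; have := le_cons true; lra.
by move=> b; apply: IH => w size_w; apply: EE'; rewrite /= size_w.
Qed.

Lemma prob_const L (b : bool) : prob L (fun _ => b) = if b then 1 else 0.
Proof. by case: b; elim: L => //= L ->; lra. Qed.

Lemma prob_bounds L E : 0 <= prob L E <= 1.
Proof.
split; [rewrite -[0](prob_const L false) | rewrite -[1](prob_const L true)]; exact: le_prob.
Qed.

Lemma prob_take K L E : (K <= L)%N -> prob L (fun w => E (take K w)) = prob K E.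
Proof.
elim: L K E => [|L IH] [|K] E // KL.
  by rewrite -[prob 0 E](prob_const L.+1); apply: eq_prob => w _; rewrite take0.
by rewrite !probS; congr ((_ + _) / 2); apply: IH.
Qed.

Lemma Rabs_le_inv x a : Rabs x <= a -> - a <= x <= a.
Proof. by rewrite /Rabs; case: Rcase_abs; lra. Qed.

Definition digit (q r : nat) : bool := (q <= r + r)%N.

Definition next_rem (q r : nat) : nat := if digit q r then (r + r - q)%N else (r + r)%N.

(* Compares the uniform real with binary digits [w] with [r / q]: the digits of
   [r / q] come from long division, and the first disagreeing bit decides.  The
   result is [true] with probability [r / q]; the unread bits are returned. *)
Fixpoint bern (q r : nat) (w : seq bool) : option (bool * seq bool) :=
  if w is b :: w' then
    if b == digit q r then bern q (next_rem q r) w' else Some (digit q r, w')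
  else None.

Definition bern_then (q r : nat) (F : bool -> seq bool -> bool) (w : seq bool) : bool :=
  if bern q r w is Some (d, w') then F d w' else false.

Lemma next_rem_le q r : (r <= q)%N -> (next_rem q r <= q)%N.
Proof. by rewrite /next_rem /digit; case: ifP; lia. Qed.

Lemma ratio_bounds q r : (0 < q)%N -> (r <= q)%N -> 0 <= INR r / INR q <= 1.
Proof.
move=> q_gt0 r_le_q; have q_pos : 0 < INR q by apply: lt_0_INR; apply/ltP.
split; first by apply: Rle_mult_inv_pos => //; apply: pos_INR.
rewrite -(Rdiv_diag (INR q)); last lra.
by apply: Rmult_le_compat_r; [apply/Rlt_le/Rinv_0_lt_compat | apply/le_INR/leP].
Qed.

Lemma next_rem_ratio q r : (0 < q)%N ->
  INR (next_rem q r) / INR q = 2 * (INR r / INR q) - (if digit q r then 1 else 0).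
Proof.
move=> q_gt0; have : INR q <> 0 by apply: not_0_INR; lia.
rewrite /next_rem; case: ifP => [/leP d1|_] q_neq0; by rewrite ?minus_INR // plus_INR; field.
Qed.

Lemma bern_full q w d w' : bern q q w = Some (d, w') -> d.
Proof.
have dq : digit q q by rewrite /digit; lia.
have nq : next_rem q q = q by rewrite /next_rem dq; lia.
by elim: w => //= b w IH; rewrite dq nq; case: ifP => // _ [<-].
Qed.

Lemma bern_zero q w d w' : (0 < q)%N -> bern q 0 w = Some (d, w') -> ~~ d.
Proof.
move=> q_gt0; have d0 : digit q 0 = false by rewrite /digit; lia.
have n0 : next_rem q 0 = 0%N by rewrite /next_rem d0.
by elim: w => //= b w IH; rewrite d0 n0; case: ifP => // _ [<-].
Qed.

Lemma bern_cat q r w z d rest :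
  bern q r w = Some (d, rest) -> bern q r (w ++ z) = Some (d, rest ++ z).
Proof. by elim: w r => //= b w IH r; case: ifP => _; [apply: IH | case=> <- <-]. Qed.

Lemma prob_bern_thenS L q r F :
  prob L.+1 (bern_then q r F) =
  (prob L (bern_then q (next_rem q r) F) + prob L (F (digit q r))) / 2.
Proof.
rewrite probS /bern_then /=.
by case: (digit q r); rewrite /= Rplus_comm.
Qed.

Lemma bern_then_err q F (v : bool -> R) eps L0 M r L :
  (0 < q)%N -> (r <= q)%N -> (L0 + M <= L)%N -> 0 <= eps -> (forall d, 0 <= v d <= 1) ->
  (forall d L, (L0 <= L)%N -> Rabs (prob L (F d) - v d) <= eps) ->
  Rabs (prob L (bern_then q r F) - (INR r / INR q * v true + (1 - INR r / INR q) * v false))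
    <= eps + (1/2) ^ M.
Proof.
move=> q_gt0 + + eps_ge0 v01 errF; elim: M r L => [|M IH] r L r_le_q L_ge.
  have := ratio_bounds q_gt0 r_le_q; have := prob_bounds L (bern_then q r F).
  by have := v01 true; have := v01 false; move=> *; apply: Rabs_le; rewrite /=; nra.
case: L L_ge => [|L] L_ge; first by lia.
rewrite prob_bern_thenS.
have := Rabs_le_inv (errF (digit q r) L ltac:(lia)).
have := Rabs_le_inv (IH (next_rem q r) L (next_rem_le r_le_q) ltac:(lia)).
rewrite next_rem_ratio //; case: (digit q r) => /= *; apply: Rabs_le; nra.
Qed.

(* The factor 3 is E[(3/2)^G] for the geometric number G of bits read. *)
Lemma bern_then_tail q F c : 1 <= c ->
  (forall d B, 1 - c * (2/3) ^ B <= prob B (F d)) ->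
  forall B r, 1 - 3 * c * (2/3) ^ B <= prob B (bern_then q r F).
Proof.
move=> c_ge1 tailF; elim=> [|B IH] r.
  by have := prob_bounds 0 (bern_then q r F); rewrite /=; lra.
rewrite prob_bern_thenS; have := IH (next_rem q r); have := tailF (digit q r) B.
by rewrite /=; lra.
Qed.

(* Decides, element by element, which [p] of the next [n] elements are kept. *)
Fixpoint sample (n p : nat) (w : seq bool) : option (seq bool * seq bool) :=
  if n is n'.+1 then
    if bern n p w is Some (d, w') then
      if sample n' (p - d) w' is Some (xs, w'') then Some (d :: xs, w'') else None
    else None
  else Some ([::], w).

Definition sample_is (n p : nat) (x w : seq bool) : bool :=
  if sample n p w is Some (xs, _) then xs == x else false.

Definition sample_ok (n p : nat) (w : seq bool) : bool := isSome (sample n p w).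

Fixpoint sample_law (n p : nat) (x : seq bool) : R :=
  match n, x with
  | 0, [::] => 1
  | n'.+1, d :: xs =>
      (if d then INR p / INR n else 1 - INR p / INR n) * sample_law n' (p - d) xs
  | _, _ => 0
  end.

Lemma sample_lawS n p d xs :
  sample_law n.+1 p (d :: xs) =
  (if d then INR p / INR n.+1 else 1 - INR p / INR n.+1) * sample_law n (p - d) xs.
Proof. by []. Qed.

(* The guard [p - d <= n] only rules out [d = false] when [p = n.+1], an outcome
   that [bern n.+1 n.+1] never produces. *)
Lemma sample_is_fit n p d0 xs w : (p <= n.+1)%N ->
  sample_is n.+1 p (d0 :: xs) w =
  bern_then n.+1 p (fun d w' => [&& p - d <= n, d == d0 & sample_is n (p - d) xs w'])%N w.
Proof.
move=> p_le; rewrite /sample_is /bern_then /=.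
case bern_w: bern => [[d w']|] //; case: (leqP (p - d) n) => fit /=.
  by case: sample => [[ys w'']|]; rewrite ?andbF.
have [d_false p_eq] : d = false /\ p = n.+1 by move: fit; case: (d) => /=; lia.
by move: bern_w; rewrite d_false p_eq => /bern_full.
Qed.

Lemma sample_law_fit n p (d0 : bool) xs : (p <= n.+1)%N ->
  let v (d : bool) := if (p - d <= n)%N && (d == d0) then sample_law n (p - d) xs else 0 in
  sample_law n.+1 p (d0 :: xs) = INR p / INR n.+1 * v true + (1 - INR p / INR n.+1) * v false.
Proof.
move=> p_le v; rewrite sample_lawS /v {v}; set a := INR p / INR n.+1.
have fit_true : (p - true <= n)%N by rewrite /=; lia.
rewrite fit_true subn0; case: leqP => /= [p_le_n | p_gt_n].
  by case: d0 => /=; rewrite ?subn0; lra.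
have a1 : a = 1 by rewrite /a (_ : p = n.+1) ?Rdiv_diag //; [apply: not_0_INR | lia].
by rewrite a1; case: d0 => /=; rewrite ?subn0; lra.
Qed.

Lemma sample_okS n p w :
  sample_ok n.+1 p w = bern_then n.+1 p (fun d w' => sample_ok n (p - d) w') w.
Proof.
by rewrite /sample_ok /bern_then /=; case: bern => [[d w']|] //; case: sample => [[]|].
Qed.

Lemma sample_cat n p w z ys rest :
  sample n p w = Some (ys, rest) -> sample n p (w ++ z) = Some (ys, rest ++ z).
Proof.
elim: n p w ys rest => [|n IH] p w ys rest /=; first by case=> <- <-.
case bern_w: bern => [[d w']|] //; rewrite (bern_cat z bern_w).
by case sample_w: sample => [[xs w'']|] //; rewrite (IH _ _ _ _ sample_w) => -[<- <-].
Qed.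

Lemma size_sample n p w ys rest : sample n p w = Some (ys, rest) -> size ys = n.
Proof.
elim: n p w ys rest => [|n IH] p w ys rest /=; first by case=> <-.
case: bern => [[d w']|] //; case sample_w: sample => [[xs w'']|] // [<- _].
by rewrite /= (IH _ _ _ _ sample_w).
Qed.

Lemma sample_law_bounds n p x : (p <= n)%N -> 0 <= sample_law n p x <= 1.
Proof.
elim: n p x => [|n IH] p [|d xs] p_le //=; try lra.
have := ratio_bounds (ltn0Sn n) p_le; case: d => /= f01.
  by have := IH (p - 1)%N xs ltac:(lia); nra.
have [p_le_n | p_gt_n] := leqP p n; first by have := IH (p - 0)%N xs ltac:(lia); nra.
have -> : p = n.+1 by lia.
by rewrite Rdiv_diag ?Rminus_diag ?Rmult_0_l; [lra | apply: not_0_INR].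
Qed.

Lemma sample_is_err n p x M L : (p <= n)%N -> (n * M <= L)%N ->
  Rabs (prob L (sample_is n p x) - sample_law n p x) <= INR n * (1/2) ^ M.
Proof.
elim: n p x L => [|n IH] p x L p_le L_ge.
  rewrite (eq_prob (E' := fun _ => x == [::])) ?prob_const; last by case: x.
  by case: x => [|d xs] /=; rewrite Rminus_diag Rabs_R0; lra.
have err_ge0 k : 0 <= INR k * (1/2) ^ M.
  by apply: Rmult_le_pos; [apply: pos_INR | apply: pow_le; lra].
case: x => [|d0 xs].
  rewrite (eq_prob (E' := fun _ => false)) ?prob_const.
    by rewrite [sample_law _ _ _]/= Rminus_diag Rabs_R0.
  move=> w _; rewrite /sample_is; case run_sample: sample => [[ys rest]|] //.
  by have := size_sample run_sample; case: ys {run_sample}.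
rewrite (eq_prob (fun w _ => sample_is_fit d0 xs w p_le)) (sample_law_fit d0 xs p_le).
apply: (Rle_trans _ (INR n * (1/2) ^ M + (1/2) ^ M)); last by rewrite S_INR; lra.
pose v (d : bool) := if (p - d <= n)%N && (d == d0) then sample_law n (p - d) xs else 0.
apply: (bern_then_err (L0 := (n * M)%N) (v := v)) => //; try lia.
  by move=> d; rewrite /v; case: ifP => [/andP [fit _] | _]; [exact: sample_law_bounds | lra].
move=> d L' L'_ge; rewrite /v; case: ifP => [/andP [fit /eqP <-] | unfit].
  by rewrite fit eqxx; apply: IH.
rewrite (eq_prob (E' := fun _ => false)) ?prob_const ?Rminus_diag ?Rabs_R0 //.
by move=> w _; rewrite andbA unfit.
Qed.

Lemma sample_law_binomial n p x : size x = n -> count id x = p ->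
  sample_law n p x = / INR 'C(n, p).
Proof.
elim: x n p => [|d xs IH] [|n] p // => [_ <- | [n_eq] p_eq]; first by rewrite /= Rinv_1.
set c := count id xs in p_eq; have c_le_n : (c <= n)%N by rewrite -n_eq count_size.
have -> : p = (d + c)%N by rewrite -p_eq.
clear p_eq.
rewrite sample_lawS addKn (IH n) //.
have INR_mul k m : INR (k * m)%N = INR k * INR m by exact: mult_INR.
have n1_neq0 : INR n.+1 <> 0 by apply: not_0_INR.
have C_neq0 : INR 'C(n, c) <> 0 by apply/not_0_INR/eqP; rewrite -lt0n bin_gt0.
case: d; rewrite ?add1n ?add0n.
  have -> : INR 'C(n.+1, c.+1) = INR n.+1 * INR 'C(n, c) / INR c.+1.
    rewrite -INR_mul (mul_bin_diag n.+1 c : (n.+1 * 'C(n, c) = _)%N) INR_mul.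
    by field; apply: not_0_INR.
  by field; split; [apply: not_0_INR | ].
have -> : INR 'C(n.+1, c) = INR n.+1 * INR 'C(n, c) / INR (n.+1 - c).
  rewrite -INR_mul (mul_bin_down n.+1 c : (n.+1 * 'C(n, c) = _)%N) INR_mul.
  by field; apply: not_0_INR; lia.
rewrite minus_INR; last by apply/leP; lia.
field; rewrite -minus_INR; [split => //; apply: not_0_INR; lia | apply/leP; lia].
Qed.

Lemma sample_ok_tail n p B : 1 - 3 ^ n * (2/3) ^ B <= prob B (sample_ok n p).
Proof.
elim: n p B => [|n IH] p B.
  by rewrite (eq_prob (E' := fun _ => true)) // prob_const; have := pow_le (2/3) B; lra.
rewrite (eq_prob (E' := bern_then n.+1 p (fun d w' => sample_ok n (p - d) w'))).
  by rewrite -tech_pow_Rmult; apply: bern_then_tail => //; apply: pow_R1_Rle; lra.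
by move=> w _; rewrite sample_okS.
Qed.

Local Close Scope R_scope.

Section Execution.

Variables (P : program) (W : nat) (w : seq bool).

Fixpoint steps (k : nat) (s : state) : option state :=
  if k is k'.+1 then obind (steps k') (step P W w s) else Some s.

Definition halted (s : state) : bool := is_halt (nth IHalt P (pc s)).

Definition stuck (s : state) : Prop := forall T, run P W w T s = None.

Lemma steps_add k1 k2 s s1 s2 :
  steps k1 s = Some s1 -> steps k2 s1 = Some s2 -> steps (k1 + k2) s = Some s2.
Proof.
by elim: k1 s => [|k1 IH] s /=; [case=> -> | case: step => //= s' /IH].
Qed.

Lemma step_not_halted s s' : step P W w s = Some s' -> ~~ halted s.
Proof. by rewrite /step /halted; case: (nth IHalt P (pc s)). Qed.

Lemma run_steps_halted k T s s' : steps k s = Some s' -> halted s' ->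
  run P W w T s = if (k <= T)%N then Some s' else None.
Proof.
elim: k T s => [|k IH] T s /=.
  by case=> <-; rewrite /halted => halt_s; case: T => [|T] /=; rewrite halt_s.
case sample_w: step => [s1|] //= /IH {}IH /IH {}IH.
by case: T => [|T] /=; rewrite -/(halted s) (negbTE (step_not_halted sample_w)) // sample_w IH.
Qed.

Lemma steps_stuck k s s' : steps k s = Some s' -> stuck s' -> stuck s.
Proof.
elim: k s => [|k IH] s /=; first by case=> ->.
case sample_w: step => [s1|] //= /IH {}IH /IH stuck_s [|T] /=;
  by rewrite -/(halted s) (negbTE (step_not_halted sample_w)) ?sample_w.
Qed.

Lemma step_stuck s : step P W w s = None -> ~~ halted s -> stuck s.
Proof. by move=> sample_w /negbTE Hh [|T] /=; rewrite -/(halted s) Hh // sample_w. Qed.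

End Execution.

(* Registers: 0 = N, 1 = h, 2 = i (current element), 3 = c (elements kept),
   5 and 6 = q and r of the current Bernoulli(r/q) trial, 7 = current digit of
   r/q, 8 = current random bit, 9 = 1, 11 = 0.  Kept elements are compacted into
   cells 0 .. c-1. *)
Definition prog : program :=
  [:: IConst 9 1;      (* 0 *)
      IJlt 2 0 3;      (* 1 *)
      IHalt;           (* 2 *)
      ISub 4 1 3;      (* 3 *)
      ISub 5 0 2;      (* 4 *)
      IAdd 6 4 11;     (* 5 *)
      IAdd 6 6 6;      (* 6 *)
      IConst 7 0;      (* 7 *)
      IJlt 6 5 11;     (* 8 *)
      IConst 7 1;      (* 9 *)
      ISub 6 6 5;      (* 10 *)
      IRand 8;         (* 11 *)
      IJlt 8 7 15;     (* 12 *)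
      IJlt 7 8 18;     (* 13 *)
      IJmp 6;          (* 14 *)
      ILoad 10 2;      (* 15 *)
      IStore 3 10;     (* 16 *)
      IAdd 3 3 9;      (* 17 *)
      IAdd 2 2 9;      (* 18 *)
      IJmp 1 ].        (* 19 *)

Section Machine.

Variables (W : nat) (w : seq bool).

Local Notation steps := (steps prog W w).
Local Notation stuck := (stuck prog W w).

Lemma bern_to_rand q r rg mm u : r <= q -> q + q < 2 ^ W -> rg 5 = q -> rg 6 = r ->
  exists2 rg', steps (if digit q r then 5 else 3) (State 6 rg mm u) = Some (State 11 rg' mm u)
    & [/\ rg' 6 = next_rem q r, rg' 7 = digit q r & forall j, j != 6 -> j != 7 -> rg' j = rg j].
Proof.
move=> r_le_q qq_lt rg5 rg6; rewrite /next_rem /digit.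
have rr_lt : r + r < 2 ^ W by lia.
case: leqP => d.
  have rrq_lt : r + r - q < 2 ^ W by lia.
  eexists; first by rewrite /= /step /= /upd /= rg6 rr_lt /= rg5 ltnNge d /= rg5 rrq_lt.
  by split => // j; rewrite /upd => /negbTE -> /negbTE ->.
eexists; first by rewrite /= /step /= /upd /= rg6 rr_lt /= rg5 d.
by split => // j; rewrite /upd => /negbTE -> /negbTE ->.
Qed.

Lemma bern_from_rand (rg mm : nat -> nat) u (d : bool) : u < size w -> rg 7 = d ->
  let b := nth false w u in
  steps (if b == d then 4 else if d then 2 else 3) (State 11 rg mm u) =
  Some (State (if b == d then 6 else if d then 15 else 18) (upd rg 8 b) mm u.+1).
Proof.
move=> u_lt rg7 /=; case: d rg7 => rg7; case Eb: (nth false w u);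
  by rewrite /= /step /= u_lt /= /upd /=; do 4 rewrite /= ?rg7 ?Eb.
Qed.

Lemma rand_stuck rg mm u : size w <= u -> stuck (State 11 rg mm u).
Proof. by move=> u_ge; apply: step_stuck; rewrite // /step /= ltnNge u_ge. Qed.

Lemma bern_round q r rg mm u b ws : r <= q -> q + q < 2 ^ W -> rg 5 = q -> rg 6 = r ->
  drop u w = b :: ws ->
  exists k rg1, [/\ steps k (State 6 rg mm u) =
      Some (State (if b == digit q r then 6 else if digit q r then 15 else 18) rg1 mm u.+1),
    k <= 9, drop u.+1 w = ws, rg1 6 = next_rem q r
    & forall j, j \notin [:: 6; 7; 8] -> rg1 j = rg j].
Proof.
move=> r_le_q qq_lt rg5 rg6 drop_u.
have u_lt : u < size w by have := congr1 size drop_u; rewrite size_drop /=; lia.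
move: drop_u; rewrite (drop_nth false u_lt) => -[b_eq ws_eq].
have [rg1 to_rand [rg1_6 rg1_7 rg1_frame]] := bern_to_rand mm u r_le_q qq_lt rg5 rg6.
have := steps_add to_rand (bern_from_rand mm u_lt rg1_7); rewrite b_eq => run_round.
exists ((if digit q r then 5 else 3) + (if b == digit q r then 4 else if digit q r then 2 else 3)).
exists (upd rg1 8 b); split => //; first by case: (digit q r); case: (b == _).
move=> j; rewrite !inE /upd => /norP [/negbTE j6 /norP [/negbTE j7 /negbTE ->]].
by rewrite rg1_frame ?j6 ?j7.
Qed.

Lemma bern_sim q r rg mm u d rest : r <= q -> q + q < 2 ^ W -> rg 5 = q -> rg 6 = r ->
  bern q r (drop u w) = Some (d, rest) ->
  exists k rg' u', [/\ steps k (State 6 rg mm u) = Some (State (if d then 15 else 18) rg' mm u'),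
    k <= 9 * (u' - u), u < u' <= size w, rest = drop u' w
    & forall j, j \notin [:: 6; 7; 8] -> rg' j = rg j].
Proof.
move Ews: (drop u w) => ws.
elim: ws u r rg Ews => [|b ws IH] u r rg Ews //= r_le_q qq_lt rg5 rg6.
have [k1 [rg1 [run1 k1_le ws_eq rg1_6 frame1]]] := bern_round mm r_le_q qq_lt rg5 rg6 Ews.
have u_lt : u < size w by have := congr1 size Ews; rewrite size_drop /=; lia.
case: eqP run1 => [_ | _] run1 bern_next; last first.
  by case: bern_next => <- <-; exists k1, rg1, u.+1; split; rewrite ?ws_eq //; lia.
have rg1_5 : rg1 5 = q by rewrite frame1.
have [k [rg' [u' [run_k k_le u_lt' rest_eq frame']]]] :=
  IH _ _ _ ws_eq (next_rem_le r_le_q) qq_lt rg1_5 rg1_6 bern_next.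
exists (k1 + k), rg', u'; split => //; [exact: steps_add run1 run_k | lia | lia |].
by move=> j j_nin; rewrite frame' ?frame1.
Qed.

Lemma bern_sim_stuck q r rg mm u : r <= q -> q + q < 2 ^ W -> rg 5 = q -> rg 6 = r ->
  bern q r (drop u w) = None -> stuck (State 6 rg mm u).
Proof.
move Ews: (drop u w) => ws.
elim: ws u r rg Ews => [|b ws IH] u r rg Ews r_le_q qq_lt rg5 rg6 /=.
  have [rg1 to_rand _] := bern_to_rand mm u r_le_q qq_lt rg5 rg6.
  move=> _; apply: (steps_stuck to_rand); apply: rand_stuck.
  by have := congr1 size Ews; rewrite size_drop /=; lia.
have [k1 [rg1 [run1 _ ws_eq rg1_6 frame1]]] := bern_round mm r_le_q qq_lt rg5 rg6 Ews.
case: eqP run1 => // _ run1 bern_none; apply: (steps_stuck run1).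
by apply: IH ws_eq (next_rem_le r_le_q) qq_lt _ rg1_6 bern_none; rewrite frame1.
Qed.

End Machine.

Lemma count_rcons_id (m : seq bool) b : count id (rcons m b) = count id m + b.
Proof. by rewrite -cats1 count_cat /= addn0. Qed.

Lemma mask_take_rcons (T : Type) (x0 : T) (s : seq T) m b : size m < size s ->
  mask (rcons m b) (take (size m).+1 s) = mask m (take (size m) s) ++ nseq b (nth x0 s (size m)).
Proof. by move=> lt_s; rewrite (take_nth x0 lt_s) mask_rcons // size_takel // ltnW. Qed.

Lemma size_mask_take (T : Type) (s : seq T) m :
  size m <= size s -> size (mask m (take (size m) s)) = count id m.
Proof. by move=> le_s; rewrite size_mask // size_takel. Qed.

Lemma map_mem_mask (T : eqType) (s : seq T) (m : seq bool) : uniq s -> size m = size s ->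
  [seq x \in mask m s | x <- s] = m.
Proof.
elim: s m => [|x s IH] [|b m] //= /andP [x_nin uniq_s] [size_m].
have x_nin' : x \in mask m s = false by apply/negbTE; apply: contra x_nin; apply: mem_mask.
congr cons; first by case: b; rewrite ?inE ?eqxx ?x_nin'.
rewrite -[RHS](IH m) //; apply/eq_in_map => y y_in; case: b => //.
by rewrite inE; case: eqP => // y_eq; rewrite -y_eq y_in in x_nin.
Qed.

Lemma perm_mask_inj (T : eqType) (s : seq T) (m1 m2 : seq bool) : uniq s ->
  size m1 = size s -> size m2 = size s -> perm_eq (mask m1 s) (mask m2 s) -> m1 = m2.
Proof.
move=> uniq_s size1 size2 /perm_mem mem12.
rewrite -(map_mem_mask uniq_s size1) -(map_mem_mask uniq_s size2).
by apply/eq_map => x; rewrite mem12.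
Qed.

Section Loop.

Variables (W : nat) (w : seq bool) (A : seq nat) (h : nat).
Hypothesis word_ok : forall v, v <= 2 * size A -> v < 2 ^ W.

Local Notation steps := (steps prog W w).
Local Notation stuck := (stuck prog W w).

Definition loop_regs (xs : seq bool) (rg : nat -> nat) : Prop :=
  [/\ rg 0 = size A, rg 1 = h, rg 2 = size xs, rg 3 = count id xs & rg 9 = 1 /\ rg 11 = 0].

Definition loop_mem (xs : seq bool) (mm : nat -> nat) : Prop :=
  (forall j, size xs <= j -> mm j = nth 0 A j) /\
  (forall j, j < count id xs -> mm j = nth 0 (mask xs (take (size xs) A)) j).

Lemma loop_to_bern xs rg mm u : loop_regs xs rg -> size xs < size A ->
  h - count id xs <= size A - size xs ->
  exists2 rg', steps 4 (State 1 rg mm u) = Some (State 6 rg' mm u)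
    & [/\ rg' 5 = size A - size xs, rg' 6 = h - count id xs
        & forall j, j \notin [:: 4; 5; 6] -> rg' j = rg j].
Proof.
move=> [rg0 rg1 rg2 rg3 [rg9 rg11]] i_lt p_le.
have [hc_lt Ni_lt hc0_lt] : [/\ h - count id xs < 2 ^ W, size A - size xs < 2 ^ W
    & h - count id xs + 0 < 2 ^ W] by split; apply: word_ok; lia.
eexists.
  by rewrite /= /step /= rg2 rg0 i_lt /= /upd /= rg1 rg3 hc_lt /= rg0 rg2 Ni_lt /= rg11 hc0_lt.
split; rewrite /upd ?addn0 //= => j; rewrite !inE.
by case/norP => /negbTE -> /norP [/negbTE -> /negbTE ->].
Qed.

Lemma loop_select xs rg mm u : loop_regs xs rg -> loop_mem xs mm -> size xs < size A ->
  exists rg' mm', [/\ steps 5 (State 15 rg mm u) = Some (State 1 rg' mm' u),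
    loop_regs (rcons xs true) rg' & loop_mem (rcons xs true) mm'].
Proof.
move=> [rg0 rg1 rg2 rg3 [rg9 rg11]] [mem_rest mem_sel] i_lt.
have c_le_i : count id xs <= size xs by apply: count_size.
have [c1_lt i1_lt] : count id xs + 1 < 2 ^ W /\ size xs + 1 < 2 ^ W by split; apply: word_ok; lia.
eexists _, _; split; first by rewrite /= /step /= /upd /= rg3 rg9 c1_lt /= rg2 rg9 i1_lt.
  by split; rewrite /upd /= ?size_rcons ?count_rcons_id ?addn1.
split=> j; rewrite /upd /= size_rcons.
  by move=> j_gt; case: eqP => [|_]; [lia | apply: mem_rest; lia].
rewrite count_rcons_id addn1 (mask_take_rcons 0) // => j_lt.
rewrite nth_cat size_mask_take ?(ltnW i_lt) //; case: eqP => [->|j_neq].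
  by rewrite ltnn subnn mem_rest.
have j_lt' : j < count id xs by lia.
by rewrite j_lt' mem_sel.
Qed.

Lemma loop_reject xs rg mm u : loop_regs xs rg -> loop_mem xs mm -> size xs < size A ->
  exists rg', [/\ steps 2 (State 18 rg mm u) = Some (State 1 rg' mm u),
    loop_regs (rcons xs false) rg' & loop_mem (rcons xs false) mm].
Proof.
move=> [rg0 rg1 rg2 rg3 [rg9 rg11]] [mem_rest mem_sel] i_lt.
have i1_lt : size xs + 1 < 2 ^ W by apply: word_ok; lia.
eexists; split; first by rewrite /= /step /= rg2 rg9 i1_lt.
  by split; rewrite /upd /= ?size_rcons ?count_rcons_id ?addn1 ?addn0.
split=> j; rewrite size_rcons; first by move=> j_gt; apply: mem_rest; lia.
rewrite count_rcons_id addn0 (mask_take_rcons 0) // cats0; exact: mem_sel.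
Qed.

Lemma loop_regs_frame xs rg rg' : loop_regs xs rg ->
  (forall j, j \notin [:: 4; 5; 6; 7; 8] -> rg' j = rg j) -> loop_regs xs rg'.
Proof. by move=> [r0 r1 r2 r3 [r9 r11]] frame; split; rewrite ?frame //; split; rewrite frame. Qed.

Definition loop_inv (xs : seq bool) (s : state) : Prop :=
  [/\ pc s = 1, loop_regs xs (reg s), loop_mem xs (Defs.mem s), used s <= size w &
      size xs <= size A /\ count id xs <= h <= count id xs + (size A - size xs)].

Lemma loop_round xs s d rest : loop_inv xs s -> size xs < size A ->
  bern (size A - size xs) (h - count id xs) (drop (used s) w) = Some (d, rest) ->
  exists k s', [/\ steps k s = Some s', loop_inv (rcons xs d) s',
    k <= 9 + 9 * (used s' - used s), used s < used s' & rest = drop (used s') w].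
Proof.
case: s => pc0 rg mm u [/= -> regs mems u_le [i_le /andP [c_le h_le]]] i_lt bern_d.
have p_le : h - count id xs <= size A - size xs by lia.
have qq_lt : (size A - size xs) + (size A - size xs) < 2 ^ W by apply: word_ok; lia.
have [rg6 to_bern [rg6_5 rg6_6 rg6_frame]] := loop_to_bern mm u regs i_lt p_le.
have [k [rg' [u' [run_k k_le u_lt' rest_eq frame']]]] :=
  bern_sim mm p_le qq_lt rg6_5 rg6_6 bern_d.
have regs' : loop_regs xs rg'.
  apply: loop_regs_frame regs _ => j j_nin.
  by rewrite frame' ?rg6_frame //; apply: contra j_nin; rewrite !inE => /or3P [] /eqP ->.
have {run_k} run_bern := steps_add to_bern run_k.
case: d in bern_d run_bern *.
  have [rg'' [mm'' [sel regs'' mems'']]] := loop_select u' regs' mems i_lt.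
  have c_lt : count id xs < h.
    case: (ltnP (count id xs) h) => // h_le_c.
    by move: bern_d; rewrite (_ : h - count id xs = 0) //; [move/bern_zero; apply; lia | lia].
  exists (4 + k + 5), (State 1 rg'' mm'' u').
  split => //=; [exact: steps_add run_bern sel | | lia | lia].
  by split => //=; rewrite ?size_rcons ?count_rcons_id; lia.
have [rg'' [rej regs'' mems'']] := loop_reject u' regs' mems i_lt.
have p_lt : h - count id xs < size A - size xs.
  rewrite ltn_neqAle p_le andbT; apply/eqP => p_eq.
  by move: bern_d; rewrite p_eq => /bern_full.
exists (4 + k + 2), (State 1 rg'' mm u').
split => //=; [exact: steps_add run_bern rej | | lia | lia].
by split => //=; rewrite ?size_rcons ?count_rcons_id; lia.
Qed.

Lemma loop_round_stuck xs s : loop_inv xs s -> size xs < size A ->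
  bern (size A - size xs) (h - count id xs) (drop (used s) w) = None -> stuck s.
Proof.
case: s => pc0 rg mm u [/= -> regs _ _ [_ /andP [_ h_le]]] i_lt bern_none.
have p_le : h - count id xs <= size A - size xs by lia.
have qq_lt : (size A - size xs) + (size A - size xs) < 2 ^ W by apply: word_ok; lia.
have [rg6 to_bern [rg6_5 rg6_6 _]] := loop_to_bern mm u regs i_lt p_le.
exact: steps_stuck to_bern (bern_sim_stuck mm p_le qq_lt rg6_5 rg6_6 bern_none).
Qed.

Lemma loop_exit xs s : loop_inv xs s -> size xs = size A ->
  steps 1 s = Some (State 2 (reg s) (Defs.mem s) (used s)) /\
  output (State 2 (reg s) (Defs.mem s) (used s)) h = mask xs A.
Proof.
case: s => pc0 rg mm u [/= -> [rg0 _ rg2 _ _] [_ mem_sel] _ [_ /andP [c_le h_le]]] i_eq.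
split; first by rewrite /= /step /= rg2 rg0 i_eq ltnn.
have c_eq : count id xs = h by lia.
have sel_eq : mask xs A = mask xs (take (size xs) A) by rewrite i_eq take_size.
rewrite /output /= -[RHS](mkseq_nth 0) size_mask ?i_eq // c_eq /mkseq sel_eq.
by apply/eq_in_map => j; rewrite mem_iota => /andP [_ j_lt]; apply: mem_sel; lia.
Qed.

Lemma loop_sim xs s ys rest : loop_inv xs s ->
  sample (size A - size xs) (h - count id xs) (drop (used s) w) = Some (ys, rest) ->
  exists k s', [/\ steps k s = Some s', halted prog s',
    k <= 1 + 9 * (size A - size xs) + 9 * (used s' - used s),
    used s <= used s' <= size w /\ rest = drop (used s') w & output s' h = mask (xs ++ ys) A].
Proof.
move n_eq: (size A - size xs) => n; elim: n xs s ys rest n_eq => [|n IH] xs s ys rest n_eq inv.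
  case=> <- <-; have [_ _ _ u_le [i_le _]] := inv.
  have [run1 out] := loop_exit inv ltac:(lia).
  by exists 1, (State 2 (reg s) (Defs.mem s) (used s)); rewrite cats0 leqnn u_le; split => //=; lia.
have i_lt : size xs < size A by lia.
rewrite /=; case bern_w: bern => [[d w']|] //; case sample_w: sample => [[ys' rest']|] // [<- <-].
rewrite -n_eq in bern_w; have [k1 [s1 [run1 inv1 k1_le u_lt w'_eq]]] := loop_round inv i_lt bern_w.
have n1_eq : size A - size (rcons xs d) = n by rewrite size_rcons; lia.
rewrite w'_eq (_ : h - count id xs - d = h - count id (rcons xs d)) in sample_w; last first.
  by rewrite count_rcons_id subnDA.
have [k2 [s' [run2 halt' k2_le [u_le rest_eq] out]]] := IH _ _ _ _ n1_eq inv1 sample_w.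
exists (k1 + k2), s'; split => //; [exact: steps_add run1 run2 | lia | split => //; lia |].
by rewrite out cat_rcons.
Qed.

Lemma loop_sim_stuck xs s : loop_inv xs s ->
  sample (size A - size xs) (h - count id xs) (drop (used s) w) = None -> stuck s.
Proof.
move n_eq: (size A - size xs) => n; elim: n xs s n_eq => [|n IH] xs s n_eq inv //=.
have i_lt : size xs < size A by lia.
case bern_w: bern => [[d w']|]; last by move=> _; apply: loop_round_stuck inv i_lt _; rewrite n_eq.
case sample_w: sample => [[ys' rest']|] // _.
rewrite -n_eq in bern_w; have [k1 [s1 [run1 inv1 _ _ w'_eq]]] := loop_round inv i_lt bern_w.
apply: (steps_stuck run1); apply: IH inv1 _; first by rewrite size_rcons; lia.
by rewrite count_rcons_id subnDA -w'_eq.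
Qed.

Lemma init_loop_inv : h <= size A ->
  exists2 s1, steps 1 (init A h) = Some s1 & used s1 = 0 /\ loop_inv [::] s1.
Proof.
move=> h_le; eexists; first by rewrite /= /step /=.
by split; [| split; rewrite //= ?subn0 ?h_le].
Qed.

Lemma prog_sim ys rest : h <= size A -> sample (size A) h w = Some (ys, rest) ->
  exists k s', [/\ steps k (init A h) = Some s', halted prog s',
    k <= 2 + 9 * size A + 9 * used s', used s' <= size w /\ rest = drop (used s') w
    & output s' h = mask ys A].
Proof.
move=> h_le run_sample; have [s1 run1 [u1 inv1]] := init_loop_inv h_le.
have [|k [s' [run2 halt' k_le [/andP [_ u_le] rest_eq] out]]] :=
  loop_sim inv1 (ys := ys) (rest := rest).
  by rewrite /= !subn0 u1 drop0.
rewrite /= !subn0 u1 in k_le.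
by exists (1 + k), s'; split => //; [exact: steps_add run1 run2 | lia].
Qed.

Lemma prog_sim_stuck : h <= size A -> sample (size A) h w = None -> stuck (init A h).
Proof.
move=> h_le run_sample; have [s1 run1 [u1 inv1]] := init_loop_inv h_le.
by apply: (steps_stuck run1); apply: loop_sim_stuck inv1 _; rewrite /= !subn0 u1 drop0.
Qed.

End Loop.

Lemma word_size_ok N v : v <= 2 * N -> v < 2 ^ word_size 2 N.
Proof.
move=> v_le; have N_lt := trunc_log_ltn N (isT : 1 < 2).
have : 2 ^ (trunc_log 2 N).+2 <= 2 ^ word_size 2 N by rewrite leq_pexp2l // /word_size; lia.
by rewrite expnS; lia.
Qed.

Local Open Scope R_scope.

Lemma Un_cv_geometric_approx (u : nat -> R) l c :
  (forall M, exists L0, forall L, (L0 <= L)%N -> Rabs (u L - l) <= c * (1/2) ^ M) -> Un_cv u l.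
Proof.
move=> approx eps eps_gt0.
have [M geom_lt] : exists M, c * (1/2) ^ M < eps.
  have half_lt1 : Rabs (1/2) < 1 by rewrite Rabs_right; lra.
  have eps_c : 0 < eps / (Rabs c + 1) by apply: Rdiv_lt_0_compat; have := Rabs_pos c; lra.
  have [M /(_ M (le_n M))] := pow_lt_1_zero _ half_lt1 _ eps_c.
  rewrite Rabs_right; last by apply/Rle_ge/pow_le; lra.
  move=> geom_small; exists M.
  have := Rabs_pos c; have := Rle_abs c; have := pow_le (1/2) M ltac:(lra).
  have : (Rabs c + 1) * (eps / (Rabs c + 1)) = eps by field; have := Rabs_pos c; lra.
  nra.
have [L0 close] := approx M; exists L0 => L /leP L_ge.
by apply: Rle_lt_trans geom_lt; apply: close.
Qed.

Section Uniformity.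

Variables (A : seq nat) (h : nat) (S : seq nat).
Hypotheses (uniq_A : uniq A) (h_le : (h <= size A)%N).
Hypotheses (uniq_S : uniq S) (S_sub : {subset S <= A}) (size_S : size S = h).

Local Notation W := (word_size 2 (size A)).

Let x := [seq a \in S | a <- A].

Lemma perm_mask_S : perm_eq (mask x A) S.
Proof.
rewrite -filter_mask; apply: uniq_perm; rewrite ?filter_uniq // => a.
by rewrite mem_filter; apply/andP/idP => [[] // | a_S]; split => //; apply: S_sub.
Qed.

Lemma count_S_indicator : count id x = h.
Proof. by rewrite -size_S -(perm_size perm_mask_S) size_mask // size_map. Qed.

Lemma mask_S_unique ys : size ys = size A -> perm_eq (mask ys A) S -> ys = x.
Proof.
move=> size_ys ys_S; apply: perm_mask_inj uniq_A size_ys (size_map _ _) _.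
by rewrite (perm_trans ys_S) // perm_sym perm_mask_S.
Qed.

Lemma prob_out_le_sample L : prob_out prog W A h S L <= prob L (sample_is (size A) h x).
Proof.
rewrite prob_outE; apply: le_prob => w _; case run_L: run => [sf|] // out_S.
have word_ok := @word_size_ok (size A).
case run_sample: (sample (size A) h w) => [[ys rest]|]; last first.
  by rewrite (prog_sim_stuck word_ok h_le run_sample) in run_L.
have [k [s' [run_k halt' _ _ out']]] := prog_sim word_ok h_le run_sample.
move: run_L; rewrite (run_steps_halted _ run_k halt'); case: leqP => // _ [sf_eq].
rewrite -sf_eq out' in out_S; rewrite /sample_is run_sample.
by rewrite (mask_S_unique (size_sample run_sample) out_S).
Qed.

Lemma sample_le_prob_out K L : (K <= L)%N -> (2 + 9 * size A + 9 * K <= L)%N ->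
  prob K (sample_is (size A) h x) <= prob_out prog W A h S L.
Proof.
move=> K_le L_ge; rewrite -(prob_take _ K_le) prob_outE; apply: le_prob => w _.
rewrite /sample_is; case run_sample: sample => [[ys rest0]|] // /eqP ys_x.
have word_ok := @word_size_ok (size A).
have := sample_cat (drop K w) run_sample; rewrite cat_take_drop => run_sample'.
have [k [s' [run_k halt' k_le [u_le rest_eq] out']]] := prog_sim word_ok h_le run_sample'.
have : size (rest0 ++ drop K w) = size (drop (used s') w) by rewrite rest_eq.
rewrite size_cat !size_drop => size_eq.
rewrite (run_steps_halted _ run_k halt'); case: leqP => [_ | ]; last by lia.
by rewrite out' ys_x perm_mask_S.
Qed.

Theorem prob_out_cv : Un_cv (prob_out prog W A h S) (/ INR 'C(size A, h)).
Proof.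
apply: (Un_cv_geometric_approx (c := INR (size A))) => M.
pose K := (size A * M)%N; exists (K + (2 + 9 * size A + 9 * K))%N => L L_ge.
have law := sample_law_binomial (size_map _ _ : size x = size A) count_S_indicator.
have := Rabs_le_inv (sample_is_err x h_le (leqnn K)).
have := Rabs_le_inv (sample_is_err x h_le (_ : size A * M <= L)%N).
rewrite law; have := prob_out_le_sample L; have := sample_le_prob_out (K := K) (L := L).
move=> /(_ ltac:(lia) ltac:(lia)) lower upper /(_ ltac:(lia)) E1 E2.
by apply: Rabs_le; lra.
Qed.

End Uniformity.

Lemma exp_le_exp x y : x <= y -> exp x <= exp y.
Proof. by case/Rle_lt_or_eq_dec => [/exp_increasing /Rlt_le | ->] //; apply: Rle_refl. Qed.

Lemma exp_opp_INR N : exp (- INR N) = exp (-1) ^ N.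
Proof.
elim: N => [|N IH]; first by rewrite /= Ropp_0 exp_0.
by rewrite S_INR /= -IH -exp_plus; congr exp; lra.
Qed.

Lemma tail_bound N : 3 ^ N * (2/3) ^ (60 * N) <= exp (- sqrt (INR N)).
Proof.
rewrite pow_mult -Rpow_mult_distr.
have base_ge : 0 <= 3 * (2/3) ^ 60 by have := pow_le (2/3) 60; lra.
have base_le : 3 * (2/3) ^ 60 <= / 3.
  rewrite (_ : 60 = 6 + 54)%N // pow_add (_ : (2/3) ^ 6 = 64/729); last by simpl; field.
  have : (2/3) ^ 54 <= 1 by rewrite -(pow1 54); apply: pow_incr; lra.
  by have := pow_le (2/3) 54; lra.
have inv3_le : / 3 <= exp (-1).
  by rewrite exp_Ropp; apply: Rinv_le_contravar; [exact: exp_pos | exact: exp_le_3].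
apply: Rle_trans (pow_incr _ _ N (conj base_ge (Rle_trans _ _ _ base_le inv3_le))) _.
rewrite -exp_opp_INR; apply/exp_le_exp/Ropp_le_contravar.
case: N => [|N]; first by rewrite sqrt_0; apply: Rle_refl.
have N1_ge : 1 <= INR N.+1 by apply: (le_INR 1); apply/leP.
have := sqrt_sqrt (INR N.+1) ltac:(lra).
have : 1 <= sqrt (INR N.+1) by rewrite -sqrt_1; apply: sqrt_le_1_alt.
nra.
Qed.

Lemma prob_within_ge A h : (h <= size A)%N ->
  1 - exp (- sqrt (INR (size A))) <=
  prob_within prog (word_size 2 (size A)) A h (549 * (size A).+1) (60 * size A).
Proof.
move=> h_le; rewrite prob_withinE.
apply: Rle_trans (_ : prob (60 * size A) (sample_ok (size A) h) <= _).
  by have := sample_ok_tail (size A) h (60 * size A); have := tail_bound (size A); lra.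
apply: le_prob => w size_w; rewrite /sample_ok; case run_sample: sample => [[ys rest]|] // _.
have [k [s' [run_k halt' k_le [u_le _] _]]] := prog_sim (@word_size_ok _) h_le run_sample.
by rewrite (run_steps_halted _ run_k halt'); case: leqP => //; lia.
Qed.

Local Close Scope R_scope.

Theorem lemma7p1 :
  exists (P : program) (cw C K : nat),
  forall (A : seq nat) (h : nat),
    uniq A -> h <= size A ->
    (forall S : seq nat, uniq S -> {subset S <= A} -> size S = h ->
       Un_cv (prob_out P (word_size cw (size A)) A h S)
             (Rinv (INR (binomial (size A) h))))
    /\
    Rle (Rminus R1 (Rmult (INR K) (exp (Ropp (sqrt (INR (size A)))))))
        (prob_within P (word_size cw (size A)) A h
            (C * (size A).+1) (60 * size A)).
Proof.
(* 549 = 9 * 61: 2 + 9 N instructions for the elements and 9 per bit. *)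
exists prog, 2%N, 549%N, 1%N => A h uniq_A h_le; split.
  by move=> S uniq_S S_sub size_S; apply: prob_out_cv.
by rewrite Rmult_1_l; apply: prob_within_ge.
Qed.
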